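(* Consider $n\ge 3$ agents with additive, identical, normalized valuations, and online algorithms without access to predictions. For any given $a\in(0,1]$, there is no online algorithm that guarantees an $a$-EFX allocation, even if the time horizon $T$ is known to the algorithm in advance.
   Context: Online fair division model: there is a set $N=[n]$ of agents and goods $g_1,\dots,g_T$ arriving one per time step. Each agent $i$ has an additive normalized valuation $v_i$ ($v_i(g_t)\ge0$, $\sum_{t=1}^T v_i(g_t)=1$, $v_i(S)=\sum_{g\in S}v_i(g)$); identical valuations means $v_i=v$ for all $i$. When $g_t$ arrives, its true values are revealed and it must be immediately and irrevocably allocated to one agent. For a bundle $S\ne\emptyset$ and valuation $f$, $\bar S^f=S\setminus\{g\}$ with $g\in\arg\max_{g'\in S}f(S\setminus\{g'\})$, and $\bar\emptyset^f=\emptyset$. For $a\in[0,1]$, an allocation $(A_1,\dots,A_n)$ is $a$-EFX if $v_i(A_i)\ge a\cdot v_i(\bar{A_j}^{v_i})$ for all $i,j$. An algorithm guarantees an $a$-EFX allocation if for every admissible input the final allocation is $a$-EFX with respect to the true valuations. *)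

From HB Require Import structures.
From mathcomp Require Import all_boot all_order all_algebra.
From mathcomp Require Import reals.
Set Implicit Arguments. Unset Strict Implicit. Unset Printing Implicit Defensive.
Import Order.TTheory GRing.Theory Num.Theory.
Local Open Scope ring_scope.

Section OnlineFD.
Variable R : realType.

Definition bval (I : finType) (v : I -> R) (S : {set I}) : R :=
  \sum_(g in S) v g.

Definition barset (I : finType) (v : I -> R) (S : {set I}) : {set I} :=
  match [pick g in S] with
  | None => set0
  | Some g0 => S :\ Order.arg_max g0 (fun g => g \in S) (fun g => bval v (S :\ g))
  end.

Definition aEFX (n : nat) (I : finType) (v : I -> R) (a : R)
    (A : 'I_n -> {set I}) : Prop :=
  forall i j : 'I_n, a * bval v (barset v (A j)) <= bval v (A i).

(* A deterministic online algorithm (for fixed n and known horizon T) decides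
   the recipient of good g_t from the values of g_1..g_t revealed so far
   (a sequence of length t); its own past decisions are determined by these. *)
Definition online_alloc (n T : nat) (alg : seq R -> 'I_n) (vals : seq R)
    : 'I_n -> {set 'I_T} :=
  fun i => [set t : 'I_T | alg (take t.+1 vals) == i].

End OnlineFD.

From HB Require Import structures.
From mathcomp Require Import all_boot all_order all_algebra.
From mathcomp Require Import reals.
From mathcomp Require Import ring lra zify.
(* With n = m + 3 agents and n + 1 goods, the adversary first sends n - 1
   goods of a tiny value p.  If the algorithm gives two of them to the same
   agent j, the instance ends with a good of value 0 and one carrying all the
   remaining mass: two agents received no early good, one of them also misses
   the last good, ends with value 0, and envies j.  Otherwise the n - 1 early
   goods went to distinct agents; the adversary sends a good of value q > p/a
   and then a last good of value r with a r larger than everything before it.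
   If the owner of the last good holds another good, every other agent envies
   that owner.  If not, the owner is the unique agent without an early good, so
   the good of value q went to an agent already holding a p-good, and any other
   holder of a single p-good envies that agent. *)

Set Implicit Arguments. Unset Strict Implicit. Unset Printing Implicit Defensive.
Import Order.TTheory GRing.Theory Num.Theory.
Local Open Scope ring_scope.

Section Bundles.
Variables (R : realType) (I : finType) (v : I -> R).

Lemma bval_set1 g : bval v [set g] = v g.
Proof. by rewrite /bval big_set1. Qed.

Lemma bval_setC1 g : bval v [set~ g] = bval v [set: I] - v g.
Proof.
rewrite /bval [in RHS](big_setD1 g) ?inE //= [v g + _]addrC addrK.
by apply: eq_bigl => h; rewrite !inE andbT.
Qed.

Lemma le_bval_barset (S : {set I}) g :
  g \in S -> bval v (S :\ g) <= bval v (barset v S).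
Proof.
move=> gS; rewrite /barset; case: pickP => [g0 g0S|/(_ g)]; last by rewrite gS.
by case: arg_maxP => //= h _; apply.
Qed.

Hypothesis v_ge0 : forall g, 0 <= v g.

Lemma bval_subset (A B : {set I}) : A \subset B -> bval v A <= bval v B.
Proof.
move=> /subsetP AB; rewrite /bval [leLHS]big_mkcond [leRHS]big_mkcond.
by apply: ler_sum => g _; case: ifP => [/AB ->|_]; last case: ifP.
Qed.

Lemma le_barset (S : {set I}) g h : g \in S -> h \in S -> g != h ->
  v h <= bval v (barset v S).
Proof.
move=> gS hS gh; apply: le_trans _ (le_bval_barset gS).
rewrite -bval_set1; apply: bval_subset.
by rewrite sub1set !inE eq_sym gh.
Qed.

Lemma not_aEFX_witness n (a : R) (A : 'I_n -> {set I}) i j g h :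
  0 <= a -> g \in A j -> h \in A j -> g != h -> bval v (A i) < a * v h ->
  ~ aEFX v a A.
Proof.
move=> a_ge0 gA hA gh lt_i /(_ i j).
have := ler_wpM2l a_ge0 (le_barset gA hA gh).
by move=> /le_trans le_h /le_h; rewrite leNgt lt_i.
Qed.

End Bundles.

Lemma card_imset_ltn (aT rT : finType) (f : aT -> rT) (D : {pred aT}) x y :
  x \in D -> y \in D -> x != y -> f x = f y -> (#|f @: D| < #|D|)%N.
Proof.
move=> xD yD xy fxy; rewrite ltn_neqAle leq_imset_card andbT.
by apply: contra xy => /imset_injP inj; rewrite (inj x y).
Qed.

Section Adversary.
Variables (R : realType) (m : nat) (alg : seq R -> 'I_m.+3) (p : R).

Definition adv (y w : R) : seq R := nseq m.+2 p ++ [:: y; w].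

Local Notation vadv y w := (fun t : 'I_m.+4 => (adv y w)`_t).
Local Notation Aadv y w := (online_alloc m.+4 alg (adv y w)).

Definition early_good (t : 'I_m.+2) : 'I_m.+4 := widen_ord (leqW (leqnSn _)) t.
Definition middle_good : 'I_m.+4 := Ordinal (leqW (ltnSn m.+2)).
Definition early_owner (t : 'I_m.+2) : 'I_m.+3 := alg (nseq t.+1 p).

Variant adv_good_spec : 'I_m.+4 -> Type :=
  | AdvEarly t : adv_good_spec (early_good t)
  | AdvMiddle : adv_good_spec middle_good
  | AdvLast : adv_good_spec ord_max.

Lemma adv_goodP g : adv_good_spec g.
Proof.
case: g => g lt_g; case: (ltngtP g m.+2) => [lt_gm | gt_gm | eq_gm].
- have -> : Ordinal lt_g = early_good (Ordinal lt_gm) by apply: val_inj.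
  exact: AdvEarly.
- have -> : Ordinal lt_g = ord_max by apply: val_inj => /=; lia.
  exact: AdvLast.
- have -> : Ordinal lt_g = middle_good by apply: val_inj.
  exact: AdvMiddle.
Qed.

Lemma early_neq_middle t : early_good t != middle_good.
Proof. by rewrite -(inj_eq val_inj) /= ltn_eqF. Qed.

Lemma middle_neq_last : middle_good != ord_max.
Proof. by rewrite -(inj_eq val_inj) /= ltn_eqF. Qed.

Lemma early_neq_last t : early_good t != ord_max.
Proof. by rewrite -(inj_eq val_inj) /= (ltn_eqF (leqW (ltn_ord t))). Qed.

Hypothesis p_gt0 : 0 < p.

Lemma size_adv y w : size (adv y w) = m.+4.
Proof. by rewrite size_cat size_nseq addn2. Qed.

Lemma adv_early y w t : (adv y w)`_(early_good t) = p.
Proof. by rewrite nth_cat size_nseq (ltn_ord t) nth_nseq (ltn_ord t). Qed.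

Lemma adv_middle y w : (adv y w)`_middle_good = y.
Proof. by rewrite nth_cat size_nseq /= ltnn subnn. Qed.

Lemma adv_last y w : (adv y w)`_(@ord_max m.+3) = w.
Proof. by rewrite nth_cat size_nseq /= ltnNge leqnSn /= subSnn. Qed.

Lemma adv_ge0 (y w : R) :
  0 <= y -> 0 <= w -> forall g : 'I_m.+4, 0 <= (adv y w)`_g.
Proof.
by move=> y0 w0 g; case: (adv_goodP g) => [t||];
  rewrite ?adv_early ?adv_middle ?adv_last // ltW.
Qed.

Lemma all_adv_ge0 (y w : R) : 0 <= y -> 0 <= w -> all (fun x => 0 <= x) (adv y w).
Proof. by move=> y0 w0; rewrite all_cat all_nseq /= ltW // y0 w0. Qed.

Lemma sum_adv y w : \sum_(x <- adv y w) x = m.+2%:R * p + y + w.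
Proof.
by rewrite big_cat big_nseq iter_addr_0 !big_cons big_nil /= addr0 addrA mulr_natl.
Qed.

Lemma bval_adv_setT y w : bval (vadv y w) [set: 'I_m.+4] = m.+2%:R * p + y + w.
Proof.
rewrite -sum_adv (big_nth 0) size_adv big_mkord /bval.
by apply: eq_bigl => t; rewrite inE.
Qed.

Lemma mem_adv_early y w t i :
  (early_good t \in Aadv y w i) = (early_owner t == i).
Proof.
by rewrite inE takel_cat ?size_nseq ?(ltn_ord t) // take_nseq ?(ltn_ord t).
Qed.

Lemma mem_adv_middle y w i :
  (middle_good \in Aadv y w i) = (alg (rcons (nseq m.+2 p) y) == i).
Proof. by rewrite inE /= take_cat size_nseq ltnNge leqnSn /= subSnn cats1. Qed.

Lemma mem_adv_last y w i : (ord_max \in Aadv y w i) = (alg (adv y w) == i).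
Proof. by rewrite inE take_oversize // size_adv. Qed.

Variable a : R.
Hypothesis a_gt0 : 0 < a.

Lemma collision_not_aEFX (w : R) t1 t2 : 0 <= w -> t1 != t2 ->
  early_owner t1 = early_owner t2 -> ~ aEFX (vadv 0 w) a (Aadv 0 w).
Proof.
move=> w_ge0 t12 owner12; set k := alg (adv 0 w).
set E := [set early_owner t | t : 'I_m.+2].
have [i] : exists i, i \notin k |: E.
  have : (#|E| < #|'I_m.+2|)%N by apply: card_imset_ltn t12 owner12.
  rewrite card_ord => E_lt.
  have := cardsC (k |: E); rewrite cardsU1 card_ord => card_kE.
  have : (0 < #|~: (k |: E)|)%N by lia.
  by case/card_gt0P => i; rewrite inE; exists i.
rewrite in_setU1 negb_or => /andP [i_k iNE].
have v_ge0 := adv_ge0 (lexx 0) w_ge0.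
have Ai_middle : Aadv 0 w i \subset [set middle_good].
  apply/subsetP => g; case: (adv_goodP g) => [t||];
    rewrite ?mem_adv_early ?mem_adv_last ?inE ?eqxx // => /eqP owner_t.
  - by rewrite -owner_t imset_f in iNE.
  - by rewrite -owner_t eqxx in i_k.
apply: (not_aEFX_witness v_ge0 (i := i) (j := early_owner t1)
  (g := early_good t1) (h := early_good t2)) (ltW a_gt0) _ _ _ _.
- by rewrite mem_adv_early.
- by rewrite mem_adv_early owner12.
- by rewrite -(inj_eq val_inj).
apply: le_lt_trans (bval_subset v_ge0 Ai_middle) _.
by rewrite bval_set1 adv_middle adv_early mulr_gt0.
Qed.

Lemma shared_last_not_aEFX (q r : R) g : 0 <= q -> 0 <= r ->
  m.+2%:R * p + q < a * r -> g != ord_max -> g \in Aadv q r (alg (adv q r)) ->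
  ~ aEFX (vadv q r) a (Aadv q r).
Proof.
move=> q_ge0 r_ge0 lt_r g_last gA; set k := alg (adv q r).
have v_ge0 := adv_ge0 q_ge0 r_ge0.
have Ai_first : Aadv q r (lift k ord0) \subset [set~ ord_max].
  apply/subsetP => h; rewrite in_setC1; apply: contraTneq => ->.
  by rewrite mem_adv_last; apply: neq_lift.
apply: (not_aEFX_witness v_ge0 (i := lift k ord0) (j := k) (g := g) (h := ord_max))
  (ltW a_gt0) gA _ g_last _; first by rewrite mem_adv_last.
apply: le_lt_trans (bval_subset v_ge0 Ai_first) _.
by rewrite bval_setC1 bval_adv_setT adv_last addrK.
Qed.

Lemma alone_last_not_aEFX (q r : R) : 0 <= q -> 0 <= r -> p < a * q ->
  injective early_owner -> Aadv q r (alg (adv q r)) \subset [set ord_max] ->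
  ~ aEFX (vadv q r) a (Aadv q r).
Proof.
move=> q_ge0 r_ge0 lt_q owner_inj k_alone.
set k := alg (adv q r); set d := alg (rcons (nseq m.+2 p) q).
set E := [set early_owner t | t : 'I_m.+2].
have v_ge0 := adv_ge0 q_ge0 r_ge0.
have kNE : k \notin E.
  apply/imsetP => -[t _ k_t].
  have := subsetP k_alone (early_good t); rewrite mem_adv_early -k_t eqxx inE.
  by move=> /(_ isT); apply/negP/early_neq_last.
have d_k : d != k.
  apply: (contraNneq _ middle_neq_last) => d_k.
  have := subsetP k_alone middle_good.
  by rewrite mem_adv_middle -/d d_k eqxx inE; apply.
have /imsetP [t0 _ d_t0] : d \in E.
  apply: contraT => dNE; have := max_card (d |: (k |: E)).
  rewrite !cardsU1 (card_imset _ owner_inj) !card_ord.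
  by rewrite in_setU1 negb_or d_k kNE dNE /= ltnn.
set t1 := lift t0 ord0.
have Ai_t1 : Aadv q r (early_owner t1) \subset [set early_good t1].
  apply/subsetP => g; case: (adv_goodP g) => [t||];
    rewrite ?mem_adv_early ?mem_adv_middle ?mem_adv_last inE.
  - by rewrite (inj_eq owner_inj) => /eqP ->.
  - by rewrite -/d d_t0 (inj_eq owner_inj) (negbTE (neq_lift t0 ord0)).
  - by move=> /eqP k_t1; move: kNE; rewrite /k k_t1 imset_f.
apply: (not_aEFX_witness v_ge0 (i := early_owner t1) (j := d) (g := early_good t0)
  (h := middle_good)) (ltW a_gt0) _ _ (early_neq_middle t0) _.
- by rewrite mem_adv_early d_t0.
- by rewrite mem_adv_middle.
apply: le_lt_trans (bval_subset v_ge0 Ai_t1) _.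
by rewrite bval_set1 adv_early adv_middle.
Qed.

Lemma adv_defeats (q r : R) : p < a * q -> m.+2%:R * p + q < a * r ->
  exists vals : seq R,
    [/\ size vals = m.+4, all (fun x => 0 <= x) vals,
        \sum_(x <- vals) x = m.+2%:R * p + q + r
      & ~ aEFX (fun t : 'I_m.+4 => vals`_t) a (online_alloc m.+4 alg vals)].
Proof.
move=> lt_q lt_r.
have q_ge0 : 0 <= q by rewrite -(pmulr_rge0 _ a_gt0) ltW // (lt_trans p_gt0).
have r_ge0 : 0 <= r.
  rewrite -(pmulr_rge0 _ a_gt0) ltW // (le_lt_trans _ lt_r) //.
  by rewrite addr_ge0 // mulr_ge0 // ltW.
have [/injectiveP owner_inj | /injectivePn [t1 [t2 t12 owner12]]] :=
  boolP (injectiveb early_owner).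
- exists (adv q r); split; rewrite ?size_adv ?all_adv_ge0 ?sum_adv //.
  have [|/subsetPn [g gA g_last]] :=
    boolP (Aadv q r (alg (adv q r)) \subset [set ord_max]).
    exact: alone_last_not_aEFX.
  by apply: shared_last_not_aEFX gA; rewrite // -in_set1.
- exists (adv 0 (q + r)); split; rewrite ?size_adv ?all_adv_ge0 ?addr_ge0 //.
    by rewrite sum_adv addr0 addrA.
  exact: collision_not_aEFX (addr_ge0 q_ge0 r_ge0) t12 owner12.
Qed.

End Adversary.

Lemma adv_weights (R : realType) m (a : R) : 0 < a ->
  exists p q r : R, [/\ 0 < p, m.+2%:R * p + q + r = 1,
                        p < a * q & m.+2%:R * p + q < a * r].
Proof.
move=> a_gt0; set k : R := m.+2%:R.
have k_gt0 : 0 < k := ltr0Sn _ _.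
have ka_gt0 : 0 < k * a := mulr_gt0 k_gt0 a_gt0.
have kaa_gt0 : 0 < k * (a * a) by rewrite !mulr_gt0.
set S := k * (a * a) + 2 * a + (k * a + 3).
have S_gt0 : 0 < S by rewrite /S; lra.
set x := S^-1; have x_gt0 : 0 < x by rewrite invr_gt0.
have ax_gt0 : 0 < a * x := mulr_gt0 a_gt0 x_gt0.
have aax_gt0 : 0 < a * a * x by rewrite !mulr_gt0.
exists (a * a * x), (2 * a * x), ((k * a + 3) * x); split => //.
- transitivity (S * x); first by rewrite /S; ring.
  exact: mulfV (lt0r_neq0 S_gt0).
- have -> : a * (2 * a * x) = a * a * x + a * a * x by ring.
  lra.
- have -> : a * ((k * a + 3) * x) = k * (a * a * x) + 2 * a * x + a * x by ring.
  lra.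
Qed.

Theorem theorem3p3 (R : realType) (n : nat) (a : R) :
  (3 <= n)%N -> 0 < a <= 1 ->
  exists T : nat,
    forall alg : seq R -> 'I_n,
      exists vals : seq R,
        [/\ size vals = T,
            all (fun x => 0 <= x) vals,
            \sum_(x <- vals) x = 1
          & ~ aEFX (fun t : 'I_T => vals`_t) a (online_alloc T alg vals)].
Proof.
move=> n_ge3 /andP [a_gt0 _].
case: n n_ge3 => [|[|[|m]]] // _.
have [p [q [r [p_gt0 sum1 lt_q lt_r]]]] := adv_weights m a_gt0.
exists m.+4 => alg.
have [vals [? ? sum_vals ?]] := adv_defeats alg p_gt0 a_gt0 lt_q lt_r.
by exists vals; split; rewrite // sum_vals.
Qed.
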